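(* Let $y$ be a string. For any $x\in\mathrm{Substr}(y)$, if $x\in\mathcal{R}$ (i.e., $x$ is represented by a black node of $\mathrm{AST}(y)$), then every prefix of $x$ also belongs to $\mathcal{R}$ (i.e., is represented by a black node of $\mathrm{AST}(y)$).
   Context: $\mathrm{Substr}(y)$ is the set of substrings of $y$. $\mathrm{EndPos}(x)=\{i\mid y[i-|x|+1..i]=x\}$; for $x\in\mathrm{Substr}(y)$, $\overleftarrow{x}$ denotes the longest string $z$ with $\mathrm{EndPos}(z)=\mathrm{EndPos}(x)$, and $\mathcal{R}=\{\overleftarrow{x}\mid x\in\mathrm{Substr}(y)\}$. Similarly, with $\mathrm{BegPos}(x)=\{i\mid y[i..i+|x|-1]=x\}$, $\overrightarrow{x}$ is the longest $z$ with $\mathrm{BegPos}(z)=\mathrm{BegPos}(x)$ and $\mathcal{L}=\{\overrightarrow{x}\mid x\in\mathrm{Substr}(y)\}$. $\mathrm{AST}(y)$ is the rooted tree on node set $\mathcal{L}\cup\mathcal{R}$ in which the parent of each non-root node $z$ is its longest proper prefix in $\mathcal{L}\cup\mathcal{R}$ (edge labeled by the remaining suffix); a node is black iff it belongs to $\mathcal{R}$. *)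

From mathcomp Require Import all_boot.
Set Implicit Arguments. Unset Strict Implicit. Unset Printing Implicit Defensive.

(* Strings over an alphabet A (an eqType) are sequences; positions in y are
   1-indexed, 1..|y| (0 allowed as end position of the empty string). *)
Section Strings.
Variable A : eqType.

(* y[i..j] (1-indexed, inclusive) = drop (i-1) (take j y) *)
Definition substr_occ (y x : seq A) (i : nat) : bool :=
  (size x <= i <= size y) && (take (size x) (drop (i - size x) y) == x).

Definition is_substr (y x : seq A) : Prop := infix x y.

(* EndPos(x) = { i | y[i-|x|+1..i] = x } *)
Definition EndPos (y x : seq A) : pred nat := fun i => substr_occ y x i.

Definition is_left_ext (y x z : seq A) : Prop :=
  EndPos y z =1 EndPos y x /\
  forall w : seq A, EndPos y w =1 EndPos y x -> size w <= size z.

Definition inR (y z : seq A) : Prop :=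
  exists x : seq A, is_substr y x /\ is_left_ext y x z.
End Strings.

(* A string x is in R exactly when it occurs in y and no longer string has the
   same end positions. Let p be a prefix of x, say x = p ++ s. Any w with the
   same end positions as p is longer than p only if w = a ++ p with a nonempty,
   since p and w are suffixes of the same prefix of y. Appending s preserves
   equality of end positions, so a ++ x would have the end positions of x and
   be longer than x. *)
From mathcomp Require Import all_boot.

Set Implicit Arguments.
Unset Strict Implicit.
Unset Printing Implicit Defensive.

Section EndPositions.
Variable A : eqType.
Implicit Types y x p s w t : seq A.

Lemma suffix_of_suffixes (a b t : seq A) :
  suffix a t -> suffix b t -> size a <= size b -> suffix a b.
Proof.
rewrite !suffixE => /eqP Ea /eqP Eb le_ab.
have le_bt : size b <= size t by rewrite -Eb size_drop leq_subr.
apply/eqP; rewrite -[X in drop _ X = _]Eb -[in RHS]Ea drop_drop; congr drop.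
by rewrite addnC addnBA // subnK.
Qed.

Lemma suffix_catE w s t :
  suffix (w ++ s) t = suffix s t && suffix w (take (size t - size s) t).
Proof.
case: (boolP (suffix s t)) => [/suffixP[u ->] | not_st] /=; last first.
  by apply: contraNF not_st => /catl_suffix.
by rewrite size_cat addnK take_size_cat // suffix_catl // eqxx.
Qed.

Lemma EndPosE y x i : EndPos y x i = (i <= size y) && suffix x (take i y).
Proof.
rewrite /EndPos /substr_occ suffixE.
case: (leqP i (size y)) => [le_iy | lt_yi]; last by rewrite andbF.
rewrite andbT /= size_takel //.
case: (leqP (size x) i) => [le_xi | lt_ix] /=; first by rewrite take_drop subnKC.
apply/esym/eqP => /(congr1 size); rewrite size_drop size_takel // => eq_ix.
by move: lt_ix; rewrite -eq_ix ltnNge leq_subr.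
Qed.

Lemma EndPos_cat y w s i :
  EndPos y (w ++ s) i =
  [&& size s <= i, EndPos y w (i - size s) & EndPos y s i].
Proof.
rewrite !EndPosE suffix_catE.
case: (leqP i (size y)) => [le_iy | _]; last by rewrite !andbF.
rewrite size_takel // -take_min (minn_idPl (leq_subr _ _)).
rewrite (leq_trans (leq_subr _ _) le_iy) /= andbC.
have [/size_suffix|] := boolP (suffix s (take i y)); last by rewrite !andbF.
by rewrite size_takel // => ->; rewrite andbT.
Qed.

Lemma EndPos_catr_eq y w p s :
  EndPos y w =1 EndPos y p -> EndPos y (w ++ s) =1 EndPos y (p ++ s).
Proof. by move=> eq_wp i; rewrite !EndPos_cat eq_wp. Qed.

Lemma substr_EndPos y p : is_substr y p -> exists i, EndPos y p i.
Proof.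
case/infixP=> u [v ->]; exists (size u + size p).
rewrite EndPosE catA take_size_cat ?size_cat // suffix_suffix andbT.
exact: leq_addr.
Qed.

Lemma EndPos_eq_suffix y p w :
  is_substr y p -> EndPos y w =1 EndPos y p -> size p <= size w -> suffix p w.
Proof.
case/substr_EndPos=> i end_p eq_wp le_pw.
have end_w : EndPos y w i by rewrite eq_wp.
move: end_p end_w; rewrite !EndPosE => /andP[_ suff_p] /andP[_ suff_w].
exact: suffix_of_suffixes suff_p suff_w le_pw.
Qed.

Definition EndPos_maximal y x :=
  forall w, EndPos y w =1 EndPos y x -> size w <= size x.

Lemma inR_maximal y x : inR y x -> EndPos_maximal y x.
Proof. by case=> x0 [_ [eq_xx0 max_x]] w eq_wx; apply: max_x => i; rewrite eq_wx. Qed.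

Lemma maximal_inR y x : is_substr y x -> EndPos_maximal y x -> inR y x.
Proof. by exists x. Qed.

Lemma EndPos_maximal_prefix y x p :
  is_substr y x -> EndPos_maximal y x -> prefix p x -> EndPos_maximal y p.
Proof.
move=> sub_x max_x /prefixP[s def_x] w eq_wp; rewrite leqNgt; apply/negP => lt_pw.
have sub_p : is_substr y p by apply: infix_trans sub_x; rewrite def_x prefix_infix.
have /suffixP[a def_w] := EndPos_eq_suffix sub_p eq_wp (ltnW lt_pw).
have : EndPos y (a ++ x) =1 EndPos y x.
  by rewrite def_x catA -def_w; apply: EndPos_catr_eq.
move/max_x; rewrite size_cat -{2}[size x]add0n leq_add2r leqn0 => /eqP/size0nil a0.
by move: lt_pw; rewrite def_w a0 ltnn.
Qed.

End EndPositions.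

Theorem lemma4 (A : eqType) (y x : seq A) :
  is_substr y x -> inR y x ->
  forall p : seq A, prefix p x -> inR y p.
Proof.
move=> sub_x /inR_maximal max_x p pref_p.
apply: maximal_inR; first exact: infix_trans (prefixW pref_p) sub_x.
exact: EndPos_maximal_prefix sub_x max_x pref_p.
Qed.
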